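(* For $n>2$, the assignment $\omega(a_{ij})=a_{ij}$ if $n+1\notin\{i,j\}$, $\omega(a_{i,n+1})=\tau_i$ for $i\le n$, extends to a well-defined group homomorphism $\omega\colon G_{n+1}^2\to G_{n,\mathcal{D}}^2$.
   Context: $G_{N}^2$ is the group with generators $a_{ij}=a_{\{i,j\}}$ for $2$-element subsets $\{i,j\}\subset\{1,\dots,N\}$ and relations $a_{ij}^2=1$; $a_{ij}a_{kl}=a_{kl}a_{ij}$ for distinct $i,j,k,l$; $a_{ij}a_{ik}a_{jk}=a_{jk}a_{ik}a_{ij}$ for distinct $i,j,k$. $G_{n,\mathcal{D}}^2$ has generators $a_{ij}$ ($\{i,j\}\subset\{1,\dots,n\}$) and $\tau_i$ ($1\le i\le n$) with relations: $a_{ij}^2=1$; $a_{ij}a_{kl}=a_{kl}a_{ij}$ for distinct $i,j,k,l$; $a_{ij}a_{ik}a_{jk}=a_{jk}a_{ik}a_{ij}$ for distinct $i,j,k$; $\tau_i^2=1$; $\tau_i\tau_j=\tau_j\tau_i$; $\tau_i\tau_ja_{ij}\tau_j\tau_i=a_{ij}$; $a_{ij}\tau_k=\tau_ka_{ij}$ for distinct $i,j,k$. *)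

From mathcomp Require Import all_boot.
Set Implicit Arguments. Unset Strict Implicit. Unset Printing Implicit Defensive.

(** * Words over an alphabet X: letters (x, false) = x, (x, true) = x^-1. *)
Definition word (X : Type) := seq (X * bool).

Definition winv (X : Type) (w : word X) : word X :=
  rev (map (fun p => (p.1, ~~ p.2)) w).

Definition wsubst (X Y : Type) (f : X -> word Y) (w : word X) : word Y :=
  flatten (map (fun p => if p.2 then winv (f p.1) else f p.1) w).

(** Equality in the group presented by generators X and relations R
    (R l r means "l = r" is a defining relation): the congruence on words
    generated by free cancellation and the relations. *)
Inductive wequiv (X : Type) (R : word X -> word X -> Prop) : word X -> word X -> Prop :=
| we_refl w : wequiv R w w
| we_sym w1 w2 : wequiv R w1 w2 -> wequiv R w2 w1
| we_trans w1 w2 w3 : wequiv R w1 w2 -> wequiv R w2 w3 -> wequiv R w1 w3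
| we_cancel (u v : word X) (x : X) (b : bool) :
    wequiv R (u ++ (x, b) :: (x, ~~ b) :: v) (u ++ v)
| we_rel (u v l r : word X) : R l r -> wequiv R (u ++ l ++ v) (u ++ r ++ v).

(** * The group G_N^2.  Indices are 0-based: paper index i+1 <-> 'I_N element i.
    Generators: unordered pairs {i,j}, represented as (i,j) with i < j. *)
Definition genG (N : nat) := {p : 'I_N * 'I_N | (p.1 < p.2)%N}.

(** the one-letter word a_{ij} (= a_{ji}); only used for i <> j *)
Definition A (N : nat) (i j : 'I_N) : word (genG N) :=
  match (insub (if (i < j)%N then (i, j) else (j, i)) : option (genG N)) with
  | Some g => [:: (g, false)]
  | None => [::]
  end.

Inductive relG (N : nat) : word (genG N) -> word (genG N) -> Prop :=
| relG_sq (i j : 'I_N) : i != j -> relG (A i j ++ A i j) [::]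
| relG_comm (i j k l : 'I_N) : uniq [:: i; j; k; l] ->
    relG (A i j ++ A k l) (A k l ++ A i j)
| relG_tetra (i j k : 'I_N) : uniq [:: i; j; k] ->
    relG (A i j ++ A i k ++ A j k) (A j k ++ A i k ++ A i j).

Definition genGD (n : nat) := (genG n + 'I_n)%type.

Definition AD (n : nat) (i j : 'I_n) : word (genGD n) :=
  map (fun p => (inl p.1, p.2)) (A i j).

Definition T (n : nat) (i : 'I_n) : word (genGD n) := [:: (inr i, false)].

Inductive relGD (n : nat) : word (genGD n) -> word (genGD n) -> Prop :=
| relGD_sq (i j : 'I_n) : i != j -> relGD (AD i j ++ AD i j) [::]
| relGD_comm (i j k l : 'I_n) : uniq [:: i; j; k; l] ->
    relGD (AD i j ++ AD k l) (AD k l ++ AD i j)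
| relGD_tetra (i j k : 'I_n) : uniq [:: i; j; k] ->
    relGD (AD i j ++ AD i k ++ AD j k) (AD j k ++ AD i k ++ AD i j)
| relGD_tsq (i : 'I_n) : relGD (T i ++ T i) [::]
| relGD_tcomm (i j : 'I_n) : relGD (T i ++ T j) (T j ++ T i)
| relGD_ttat (i j : 'I_n) : i != j ->
    relGD (T i ++ T j ++ AD i j ++ T j ++ T i) (AD i j)
| relGD_at (i j k : 'I_n) : uniq [:: i; j; k] ->
    relGD (AD i j ++ T k) (T k ++ AD i j).

Definition omega_gen (n : nat) (g : genG n.+1) : word (genGD n) :=
  let i := (val g).1 in let j := (val g).2 in
  if (nat_of_ord j == n) then
    match (insub (nat_of_ord i) : option 'I_n) with
    | Some i' => T i' | None => [::] end
  else
    match (insub (nat_of_ord i) : option 'I_n), (insub (nat_of_ord j) : option 'I_n) with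
    | Some i', Some j' => AD i' j'
    | _, _ => [::] end.

Definition omega (n : nat) (w : word (genG n.+1)) : word (genGD n) :=
  wsubst (@omega_gen n) w.

(** The map on words is a substitution, hence multiplicative and compatible
    with free cancellation, so it suffices that every defining relation of
    G_{n+1}^2 is sent to a consequence of the relations of G_{n,D}^2.
    Relations not involving the index n+1 go to relations of the same kind.
    A commutation a_{ij} a_{k,n+1} = a_{k,n+1} a_{ij} becomes a_{ij} tau_k =
    tau_k a_{ij}.  The tetrahedron relations through n+1 become
    a_{ij} tau_i tau_j = tau_j tau_i a_{ij} and
    tau_i a_{ik} tau_k = tau_k a_{ik} tau_i, both consequences of
    tau_i tau_j a_{ij} tau_j tau_i = a_{ij} since the tau's are commuting
    involutions. *)
From mathcomp Require Import all_boot.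
Set Implicit Arguments. Unset Strict Implicit. Unset Printing Implicit Defensive.

Section WordCongruence.

Variables (X : Type) (R : word X -> word X -> Prop).

Lemma wequiv_ctx u v a b :
  wequiv R a b -> wequiv R (u ++ a ++ v) (u ++ b ++ v).
Proof.
move=> eq_ab; elim: eq_ab u v => {a b}.
- by move=> w u v; apply: we_refl.
- by move=> w1 w2 _ IH u v; apply: we_sym.
- by move=> w1 w2 w3 _ IH1 _ IH2 u v; apply: we_trans (IH1 u v) (IH2 u v).
- move=> u0 v0 x b u v.
  by have := we_cancel R (u ++ u0) (v0 ++ v) x b; rewrite -!catA.
- move=> u0 v0 l r Rlr u v.
  by have := we_rel (u ++ u0) (v0 ++ v) Rlr; rewrite -!catA.
Qed.

Lemma wequiv_rewrite u l r v w1 w2 :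
  w1 = u ++ l ++ v -> wequiv R l r -> wequiv R (u ++ r ++ v) w2 -> wequiv R w1 w2.
Proof. by move=> -> eq_lr; apply: we_trans (wequiv_ctx u v eq_lr). Qed.

Lemma rel_wequiv l r : R l r -> wequiv R l r.
Proof. by move=> Rlr; have := we_rel [::] [::] Rlr; rewrite /= !cats0. Qed.

Lemma winv_cons (x : X * bool) w : winv (x :: w) = winv w ++ [:: (x.1, ~~ x.2)].
Proof. by rewrite /winv /= rev_cons -cats1. Qed.

Lemma winvK : involutive (@winv X).
Proof.
elim=> [|x w IH] //.
rewrite winv_cons /winv map_cat rev_cat /= negbK -/(winv (winv w)) IH.
by case: x.
Qed.

Lemma wequiv_cat_winv w : wequiv R (w ++ winv w) [::].
Proof.
elim: w => [|[x b] w IH]; first exact: we_refl.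
rewrite winv_cons; apply: (wequiv_rewrite (u := [:: (x, b)]) _ IH).
  by rewrite /= catA.
exact: (we_cancel R [::] [::] x b).
Qed.

Lemma wequiv_cancel u v w : wequiv R (u ++ w ++ winv w ++ v) (u ++ v).
Proof.
apply: (wequiv_rewrite (u := u) (v := v) _ (wequiv_cat_winv w)); last exact: we_refl.
by rewrite -catA.
Qed.

End WordCongruence.

Section Substitution.

Variables (X Y : Type) (R : word X -> word X -> Prop) (S : word Y -> word Y -> Prop).
Variable f : X -> word Y.

Lemma wsubst_cat u v : wsubst f (u ++ v) = wsubst f u ++ wsubst f v.
Proof. by rewrite /wsubst map_cat flatten_cat. Qed.

Lemma wsubst_cons p w :
  wsubst f (p :: w) = (if p.2 then winv (f p.1) else f p.1) ++ wsubst f w.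
Proof. by []. Qed.

Lemma wsubst_letter x : wsubst f [:: (x, false)] = f x.
Proof. by rewrite /wsubst /= cats0. Qed.

Hypothesis f_rel : forall l r, R l r -> wequiv S (wsubst f l) (wsubst f r).

Lemma wequiv_wsubst w1 w2 :
  wequiv R w1 w2 -> wequiv S (wsubst f w1) (wsubst f w2).
Proof.
elim=> {w1 w2}.
- by move=> w; apply: we_refl.
- by move=> w1 w2 _ IH; apply: we_sym.
- by move=> w1 w2 w3 _ IH1 _ IH2; apply: we_trans IH1 IH2.
- move=> u v x b; rewrite !wsubst_cat !wsubst_cons /=.
  case: b => /=; last exact: wequiv_cancel.
  by rewrite -{2}[f x]winvK; apply: wequiv_cancel.
- by move=> u v l r Rlr; rewrite !wsubst_cat; apply/wequiv_ctx/f_rel.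
Qed.

End Substitution.

Lemma A_sym N (i j : 'I_N) : A i j = A j i.
Proof. by rewrite /A; case: ltngtP => // /val_inj ->. Qed.

Lemma AD_sym n (i j : 'I_n) : AD i j = AD j i.
Proof. by rewrite /AD A_sym. Qed.

Lemma A_diag N (i : 'I_N) : A i i = [::].
Proof. by rewrite /A ltnn; case: insubP => // g; rewrite /= ltnn. Qed.

Lemma A_lt N (i j : 'I_N) : (i < j)%N ->
  exists2 g : genG N, A i j = [:: (g, false)] & val g = (i, j).
Proof.
move=> lt_ij; rewrite /A lt_ij.
by case: insubP => [g _ val_g | ]; [exists g | rewrite /= lt_ij].
Qed.

Local Notation lift_n := (lift ord_max).

Lemma omega_A_lift n (a b : 'I_n) : omega (A (lift_n a) (lift_n b)) = AD a b.
Proof.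
wlog lt_ab : a b / (a < b)%N.
  move=> lt_case; case: (ltngtP a b) => [/lt_case // | /lt_case | /val_inj ->].
    by rewrite A_sym AD_sym.
  by rewrite /AD !A_diag.
have [|g -> val_g] := @A_lt _ (lift_n a) (lift_n b); first by rewrite !lift_max.
move: (lift_max a) (lift_max b).
rewrite /omega wsubst_letter /omega_gen val_g /= => -> ->.
by rewrite (ltn_eqF (ltn_ord b)) !valK.
Qed.

Lemma omega_A_lift_max n (a : 'I_n) : omega (A (lift_n a) ord_max) = T a.
Proof.
have [|g -> val_g] := @A_lt _ (lift_n a) ord_max; first by rewrite lift_max.
move: (lift_max a); rewrite /omega wsubst_letter /omega_gen val_g /= => ->.
by rewrite eqxx valK.
Qed.

Lemma omega_A_max_lift n (a : 'I_n) : omega (A ord_max (lift_n a)) = T a.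
Proof. by rewrite A_sym omega_A_lift_max. Qed.

Lemma omega_cat n (u v : word (genG n.+1)) : omega (u ++ v) = omega u ++ omega v.
Proof. exact: wsubst_cat. Qed.

Section DerivedRelations.

Variable n : nat.
Local Notation wequivD := (wequiv (@relGD n)).

Lemma T_cancel u v (i : 'I_n) : wequivD (u ++ T i ++ T i ++ v) (u ++ v).
Proof.
apply: (wequiv_rewrite (u := u) (v := v) _ (rel_wequiv (relGD_tsq i))).
  by rewrite -catA.
exact: we_refl.
Qed.

Lemma AD_TT_comm (a b : 'I_n) : a != b ->
  wequivD (AD a b ++ T a ++ T b) (T b ++ T a ++ AD a b).
Proof.
(* tau_b tau_a a_ab = tau_b tau_a (tau_a tau_b a_ab tau_b tau_a) = a_ab tau_b tau_a *)
move=> neq_ab.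
apply: (wequiv_rewrite (u := AD a b) (v := [::]) _ (rel_wequiv (relGD_tcomm a b))).
  by rewrite cats0.
apply: we_sym.
apply: (wequiv_rewrite (u := T b ++ T a) (v := [::]) _
          (we_sym (rel_wequiv (relGD_ttat neq_ab)))).
  by rewrite cats0 catA.
rewrite cats0 -!catA.
apply: we_trans (T_cancel (T b) _ a) _.
exact: (T_cancel [::] _ b).
Qed.

Lemma T_AD_T_comm (a c : 'I_n) : a != c ->
  wequivD (T a ++ AD a c ++ T c) (T c ++ AD a c ++ T a).
Proof.
(* tau_a a_ac tau_c = tau_a (tau_a tau_c a_ac tau_c tau_a) tau_c
                   = tau_c a_ac tau_c tau_c tau_a *)
move=> neq_ac.
apply: (wequiv_rewrite (u := T a) (v := T c) _
          (we_sym (rel_wequiv (relGD_ttat neq_ac)))) => //.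
rewrite -!catA; apply: we_trans (T_cancel [::] _ a) _ => /=.
apply: (wequiv_rewrite (u := T c ++ AD a c ++ T c) (v := [::]) _
          (rel_wequiv (relGD_tcomm a c))).
  by rewrite cats0 -!catA.
rewrite cats0 -!catA.
exact: (T_cancel (T c ++ AD a c) _ c).
Qed.

End DerivedRelations.

Local Ltac case_lift i := case: (unliftP ord_max i) => [? ->|->].
Local Ltac simpl_lift_uniq :=
  rewrite /= ?inE ?negb_or ?(inj_eq lift_inj) ?lift_eqF ?eq_liftF ?eqxx ?andbF ?andbT //=.
Local Ltac split_hyps :=
  repeat match goal with H : is_true (_ && _) |- _ => case/andP: H => ? ? end.
Local Ltac prove_uniq := rewrite /= ?inE ?negb_or ?andbT;
  repeat (apply/andP; split); by [ | rewrite eq_sym].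
Local Ltac rewrite_omega :=
  rewrite ?omega_cat ?omega_A_lift ?omega_A_lift_max ?omega_A_max_lift.

Lemma omega_relG_sq n (i j : 'I_n.+1) : i != j ->
  wequiv (@relGD n) (omega (A i j ++ A i j)) (omega [::]).
Proof.
by case_lift i; case_lift j; simpl_lift_uniq; move=> *; rewrite_omega;
  apply: rel_wequiv; constructor.
Qed.

Lemma omega_relG_comm n (i j k l : 'I_n.+1) : uniq [:: i; j; k; l] ->
  wequiv (@relGD n) (omega (A i j ++ A k l)) (omega (A k l ++ A i j)).
Proof.
case_lift i; case_lift j; case_lift k; case_lift l; simpl_lift_uniq;
  move=> *; split_hyps; rewrite_omega.
all: first [ apply: rel_wequiv; apply: relGD_comm
           | apply: rel_wequiv; apply: relGD_at
           | apply: we_sym; apply: rel_wequiv; apply: relGD_at ]; prove_uniq.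
Qed.

Lemma omega_relG_tetra n (i j k : 'I_n.+1) : uniq [:: i; j; k] ->
  wequiv (@relGD n) (omega (A i j ++ A i k ++ A j k))
                    (omega (A j k ++ A i k ++ A i j)).
Proof.
case_lift i; case_lift j; case_lift k; simpl_lift_uniq;
  move=> *; split_hyps; rewrite_omega.
all: first [ apply: rel_wequiv; apply: relGD_tetra
           | apply: AD_TT_comm
           | apply: T_AD_T_comm
           | apply: we_sym; rewrite AD_sym; apply: AD_TT_comm ]; prove_uniq.
Qed.

Lemma omega_relG n (l r : word (genG n.+1)) :
  relG l r -> wequiv (@relGD n) (omega l) (omega r).
Proof.
by case; [exact: omega_relG_sq | exact: omega_relG_comm | exact: omega_relG_tetra].
Qed.

Theorem mainTheorem6 (n : nat) (hn : (2 < n)%N) (w1 w2 : word (genG n.+1)) :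
  wequiv (@relG n.+1) w1 w2 -> wequiv (@relGD n) (omega w1) (omega w2).
Proof. exact: (wequiv_wsubst (@omega_relG n)). Qed.
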